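(* Let $n,m\ge1$ be integers, $L>0$, $\lambda\in[0,1)$, and let $G_\alpha$ be the $3\times3$ matrix defined in the context. If $0<\alpha\le\min\Big\{\frac{(1-\lambda^2)^2}{35\lambda},\frac{\sqrt n}{\sqrt{8m}}\Big\}\frac1L$, then the spectral radius satisfies $\rho(G_\alpha)<1$; consequently $I_3-G_\alpha$ is invertible and $\sum_{k=0}^\infty G_\alpha^k=(I_3-G_\alpha)^{-1}$.
   Context: Expressions with $\lambda$ in a denominator are read as $+\infty$ when $\lambda=0$. The matrix $$G_\alpha:=\begin{bmatrix}\frac{1+\lambda^2}{2}&0&\frac{2\lambda^2\alpha^2L^2}{1-\lambda^2}\\ \frac9{4m}&1-\frac1{4m}&0\\ \frac{30.5}{1-\lambda^2}&\frac{97}8&\frac{1+\lambda^2}2\end{bmatrix}.$$ $\rho(\cdot)$ denotes spectral radius. *)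

From HB Require Import structures.
From mathcomp Require Import all_boot all_order all_algebra.
From mathcomp Require Import all_classical all_reals all_analysis.
From mathcomp Require Import complex.
Set Implicit Arguments. Unset Strict Implicit. Unset Printing Implicit Defensive.
Import Order.TTheory GRing.Theory Num.Theory numFieldTopology.Exports numFieldNormedType.Exports.
Local Open Scope ring_scope.
Local Open Scope classical_set_scope.

Definition spectral_radius (R : realType) (k : nat) (A : 'M[R]_k) : R :=
  sup [set ComplexField.Normc.normc z | z in [set z : R[i] |
         eigenvalue (map_mx (fun x : R => (x%:C)%C) A) z]].

Definition mx3 (R : ringType) (a b c d e f g h i : R) : 'M[R]_3 :=
  \matrix_(r < 3, s < 3) nth 0 (nth [::] [:: [:: a; b; c]; [:: d; e; f]; [:: g; h; i]] r) s.

Definition Galpha (R : realType) (lam alpha L : R) (m : nat) : 'M[R]_3 :=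
  mx3 ((1 + lam ^+ 2) / 2) 0 (2 * lam ^+ 2 * alpha ^+ 2 * L ^+ 2 / (1 - lam ^+ 2))
      (9 / (4 * m%:R)) (1 - 1 / (4 * m%:R)) 0
      ((61 / 2) / (1 - lam ^+ 2)) (97 / 8) ((1 + lam ^+ 2) / 2).

From HB Require Import structures.
From mathcomp Require Import all_boot all_order all_algebra.
From mathcomp Require Import all_classical all_reals all_analysis.
From mathcomp Require Import complex.
From mathcomp Require Import ring lra.
Import Order.TTheory GRing.Theory Num.Theory numFieldTopology.Exports numFieldNormedType.Exports.
Local Open Scope ring_scope.
Local Open Scope classical_set_scope.

(* A nonnegative square matrix A admitting a positive weight vector
   w with  w^T A < w^T  componentwise (a strictly subinvariant weight) behaves
   like a contraction: taking c < 1 with  w^T A <= c w^T,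
   - the Collatz-Wielandt argument (compare a nonnegative y with  r y^T <= y^T A
     against w at the index maximising y_i / w_i) gives  r <= c;  applied to
     the moduli of a complex eigenvector this bounds every eigenvalue by c, so
     rho(A) <= c < 1, and applied to a real fixed vector of A it shows that
     1 - A is invertible;
   - w^T A^N <= c^N w^T, so A^N -> 0 and the partial sums of the Neumann series,
     (1 - A^N)(1 - A)^-1, converge to (1 - A)^-1.
   For G_alpha we take the weight w = (300 / s^2, 50 m, 1) with s = 1 - lambda^2:
   the first two column inequalities hold for all admissible parameters, the
   third one reduces to  1200 (lambda alpha L)^2 < s^4,  which is exactly what
   the step-size condition  35 lambda alpha L <= s^2  provides. *)

Lemma entry_le_mx_norm (R : realType) (m n : nat) (B : 'M[R]_(m.+1, n.+1)) i j :
  `|B i j| <= `|B|.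
Proof.
rewrite (_ : `|B| = mx_norm B) // mx_normrE.
by apply/bigmax_geP; right; exists (i, j).
Qed.

Section StrictlySubinvariantWeight.
Context {R : realType} {n : nat} {A : 'M[R]_n.+1}.
Hypothesis A_ge0 : forall i j, 0 <= A i j.

Lemma subinvariance_rate {w : 'I_n.+1 -> R} :
  (forall i, 0 < w i) -> (forall j, \sum_i w i * A i j < w j) ->
  exists c : R, [/\ 0 <= c, c < 1 & forall j, \sum_i w i * A i j <= c * w j].
Proof.
move=> w_gt0 w_sub.
exists (\big[Order.max/0]_j ((\sum_i w i * A i j) / w j)); split.
- exact: bigmax_ge_id.
- by apply/bigmax_ltP; split=> // j _; rewrite ltr_pdivrMr ?w_gt0 // mul1r.
- move=> j; rewrite -ler_pdivrMr ?w_gt0 //.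
  by apply/bigmax_geP; right; exists j.
Qed.

(* Positive weights can be rescaled to weights at least 1: multiply by
   \sum_k (w k)^-1, which dominates each (w i)^-1. *)
Lemma normalize_weight {w : 'I_n.+1 -> R} :
  (forall i, 0 < w i) -> (forall j, \sum_i w i * A i j < w j) ->
  exists w' : 'I_n.+1 -> R,
    (forall i, 1 <= w' i) /\ (forall j, \sum_i w' i * A i j < w' j).
Proof.
move=> w_gt0 w_sub; set t := \sum_k (w k)^-1.
have t_ge i : (w i)^-1 <= t.
  rewrite /t (bigD1 i) //= lerDl; apply: sumr_ge0 => k _.
  by rewrite invr_ge0 ltW.
have t_gt0 : 0 < t by apply: lt_le_trans (t_ge ord0); rewrite invr_gt0.
exists (fun i => w i * t); split=> [i | j].
  by rewrite -ler_pdivrMl ?w_gt0 // mulr1.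
under eq_bigr do rewrite mulrAC.
by rewrite -mulr_suml ltr_pM2r.
Qed.

Context {w : 'I_n.+1 -> R} {c : R}.
Hypothesis w_gt0 : forall i, 0 < w i.
Hypothesis c_ge0 : 0 <= c.
Hypothesis w_rate : forall j, \sum_i w i * A i j <= c * w j.

(* Collatz-Wielandt bound: a nonzero nonnegative y with  r y^T <= y^T A  has
   r <= c.  Compare y with (y_j0 / w_j0) w where j0 maximises y_i / w_i. *)
Lemma collatz_wielandt_le (r : R) (y : 'I_n.+1 -> R) :
  (forall i, 0 <= y i) -> (exists k, 0 < y k) ->
  (forall j, r * y j <= \sum_i y i * A i j) -> r <= c.
Proof.
move=> y_ge0 [k yk_gt0] y_super.
case: (@arg_maxP _ R _ ord0 xpredT (fun j => y j / w j)) => // j0 _ j0_max.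
set t := y j0 / w j0 in j0_max.
have y_le i : y i <= t * w i by rewrite -ler_pdivrMr ?w_gt0 //; exact: j0_max.
have t_gt0 : 0 < t by apply: lt_le_trans (j0_max k isT); exact: divr_gt0.
have y_j0 : y j0 = t * w j0 by rewrite /t mulrVK // unitfE gt_eqF ?w_gt0.
have : r * y j0 <= c * y j0.
  apply: (le_trans (y_super j0)).
  apply: (@le_trans _ _ (\sum_i (t * w i) * A i j0)).
    by apply: ler_sum => i _; apply: ler_wpM2r.
  under eq_bigr do rewrite -mulrA.
  by rewrite -mulr_sumr y_j0 mulrCA ler_wpM2l // ltW.
by rewrite ler_pM2r // y_j0 mulr_gt0.
Qed.

Lemma row_nz_entry {F : fieldType} {k : nat} (v : 'rV[F]_k) :
  v != 0 -> exists i, v 0 i != 0.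
Proof.
move=> v_nz; apply/existsP; apply: contraR v_nz => /existsPn v0.
by apply/eqP/matrixP => i j; rewrite (ord1 i) mxE; exact/eqP/negbNE/v0.
Qed.

Let normc (z : R[i]) : R := ComplexField.Normc.normc z.

Lemma normcE (z : R[i]) : `|z| = ((normc z)%:C)%C.
Proof. by []. Qed.

Lemma normc_ge0 (z : R[i]) : 0 <= normc z.
Proof.
by have := normr_ge0 z; rewrite normcE -[X in X <= _]/((0 : R)%:C)%C lecR.
Qed.

(* Every complex eigenvalue of A has modulus at most c: the moduli of the
   coordinates of a left eigenvector satisfy |z| |v|^T <= |v|^T A. *)
Lemma eigenvalue_normc_le (z : R[i]) :
  eigenvalue (map_mx (fun x : R => (x%:C)%C) A) z -> normc z <= c.
Proof.
move=> /eigenvalueP [v v_eig v_nz].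
apply: (@collatz_wielandt_le _ (fun i => normc (v 0 i))) => [i||j].
- exact: normc_ge0.
- have [k vk_nz] := row_nz_entry v v_nz; exists k.
  rewrite lt_def normc_ge0 andbT; apply/eqP => /ComplexField.Normc.eq0_normc.
  exact/eqP.
- rewrite -lecR.
  have := congr1 (fun M => fun_of_matrix M 0 j) v_eig; rewrite !mxE => v_eig_j.
  rewrite rmorphM /= -!normcE -normrM -v_eig_j rmorph_sum /=.
  apply: (le_trans (ler_norm_sum _ _ _)); apply: ler_sum => i _.
  by rewrite mxE normrM rmorphM /= normcE ger0_norm // lecR.
Qed.

Lemma spectral_radius_le : spectral_radius A <= c.
Proof.
rewrite /spectral_radius.
set S := [set normc z | z in _].
have [S_nz|S0] := pselect (S !=set0).
  by apply: ge_sup => // _ [z z_eig <-]; exact: eigenvalue_normc_le.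
by move/set0P/negP/negbNE/eqP: S0 => ->; rewrite sup0.
Qed.

(* If c < 1 then 1 is not an eigenvalue of A, i.e. 1 - A is invertible: a
   nonzero v with v A = v would give 1 <= c by the Collatz-Wielandt bound. *)
Lemma unit_one_sub : c < 1 -> (1%:M - A) \in unitmx.
Proof.
move=> c_lt1; apply/negPn/negP => not_unit.
have : kermx (1%:M - A) != 0 by rewrite kermx_eq0 row_free_unit.
move=> /rowV0Pn [v /sub_kermxP v_ker v_nz].
have v_fix : v *m A = v.
  by move: v_ker; rewrite mulmxBr mulmx1 => /eqP; rewrite subr_eq0 => /eqP <-.
suff : 1 <= c by rewrite leNgt c_lt1.
apply: (@collatz_wielandt_le 1 (fun i => `|v 0 i|)) => [i||j].
- exact: normr_ge0.
- by have [k vk_nz] := row_nz_entry v v_nz; exists k; rewrite normr_gt0.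
- rewrite mul1r.
  have := congr1 (fun M => fun_of_matrix M 0 j) v_fix; rewrite !mxE => <-.
  apply: (le_trans (ler_norm_sum _ _ _)); apply: ler_sum => i _.
  by rewrite normrM (ger0_norm (A_ge0 i j)).
Qed.

Lemma pow_rate N : (forall i j, 0 <= (A ^+ N) i j) /\
  forall j, \sum_i w i * (A ^+ N) i j <= c ^+ N * w j.
Proof.
elim: N => [|N [AN_ge0 AN_rate]].
  split=> [i j|j]; first by rewrite expr0 mxE ler0n.
  rewrite expr0 mul1r (bigD1 j) //= mxE eqxx mulr1 big1 ?addr0 //.
  by move=> i /negbTE ij; rewrite mxE ij mulr0.
split=> [i j|j]; rewrite exprSr -mulmxE.
  by rewrite mxE; apply: sumr_ge0 => k _; apply: mulr_ge0.
under eq_bigr do rewrite mxE mulr_sumr.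
rewrite exchange_big /=.
apply: (@le_trans _ _ (\sum_k c ^+ N * w k * A k j)).
  apply: ler_sum => k _; under eq_bigr do rewrite mulrA.
  by rewrite -mulr_suml ler_wpM2r.
under eq_bigr do rewrite -mulrA.
by rewrite -mulr_sumr exprSr -mulrA ler_wpM2l ?exprn_ge0.
Qed.

(* For c < 1 and weights at least 1, A^N B -> 0 for every matrix B: each entry
   of A^N B is bounded by c^N \sum_k w_k |B|. *)
Lemma pow_mulmx_cvg0 (B : 'M[R]_n.+1) : c < 1 -> (forall i, 1 <= w i) ->
  (fun N => A ^+ N *m B) @ \oo --> (0 : 'M[R]_n.+1).
Proof.
move=> c_lt1 w_ge1; set K := \sum_k w k * `|B|.
have K_ge0 : 0 <= K.
  by apply: sumr_ge0 => k _; rewrite mulr_ge0 ?(ltW (w_gt0 k)).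
have entry_le N i j : `|(A ^+ N *m B) i j| <= c ^+ N * K.
  have [AN_ge0 AN_rate] := pow_rate N.
  rewrite mxE /K mulr_sumr; apply: (le_trans (ler_norm_sum _ _ _)).
  apply: ler_sum => k _; rewrite normrM mulrA (ger0_norm (AN_ge0 i k)).
  apply: ler_pM => //; last exact: entry_le_mx_norm.
  apply: (@le_trans _ _ (w i * (A ^+ N) i k)); first by rewrite ler_peMl.
  apply: le_trans (AN_rate k); rewrite (bigD1 i) //= lerDl.
  by apply: sumr_ge0 => l _; rewrite mulr_ge0 ?(ltW (w_gt0 l)).
apply/cvgr0Pnorm_lt => eps eps_gt0.
have K1_gt0 : 0 < K + 1 by rewrite ltr_wpDl.
have c_norm : `|c| < 1 by rewrite ger0_norm.
have : \forall N \near \oo, `|c ^+ N| < eps / (K + 1).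
  by apply: (@cvgr0_norm_lt _ _ _ _ _ _ (cvg_expr c_norm)); rewrite divr_gt0.
apply: filterS => N; rewrite ger0_norm ?exprn_ge0 // ltr_pdivlMr // => cN_small.
rewrite (_ : `|_| = mx_norm (A ^+ N *m B)) // mx_normrE.
apply: bigmax_lt => // -[i j] _ /=.
apply: (le_lt_trans (entry_le N i j)); apply: le_lt_trans cN_small.
by rewrite ler_wpM2l ?exprn_ge0 // lerDl.
Qed.

End StrictlySubinvariantWeight.

Lemma series_geometric_mulB (T : pzRingType) (A : T) N :
  series (fun k => A ^+ k) N * (1 - A) = 1 - A ^+ N.
Proof.
elim: N => [|N IH]; first by rewrite /series /= big_geq // mul0r expr0 subrr.
by rewrite seriesSr mulrDl IH mulrBr mulr1 exprSr addrA subrK.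
Qed.

Theorem neumann_of_subinvariant_weight (R : realType) (n : nat)
    (A : 'M[R]_n.+1) (w : 'I_n.+1 -> R) :
  (forall i j, 0 <= A i j) -> (forall i, 0 < w i) ->
  (forall j, \sum_i w i * A i j < w j) ->
  spectral_radius A < 1 /\ (1%:M - A) \in unitmx /\
  series (fun k => A ^+ k : 'M[R]_n.+1) @ \oo --> (invmx (1%:M - A) : 'M[R]_n.+1).
Proof.
move=> A_ge0 w_gt0 w_sub.
have [w' [w'_ge1 w'_sub]] := normalize_weight w_gt0 w_sub.
have w'_gt0 i : 0 < w' i by apply: lt_le_trans (w'_ge1 i).
have [c [c_ge0 c_lt1 w'_rate]] := subinvariance_rate w'_gt0 w'_sub.
have unitB := unit_one_sub A_ge0 w'_gt0 w'_rate c_lt1.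
have rho_le := spectral_radius_le A_ge0 w'_gt0 c_ge0 w'_rate.
split; first exact: le_lt_trans rho_le c_lt1.
split=> //.
have -> : series (fun k => A ^+ k) =
    (fun N => invmx (1%:M - A) - A ^+ N *m invmx (1%:M - A)).
  apply: funext => N.
  by rewrite -[LHS](mulmxK unitB) mulmxE series_geometric_mulB -mulmxE mulmxBl mul1mx.
rewrite -[X in _ --> X]subr0; apply: cvgB; first exact: cvg_cst.
exact: (pow_mulmx_cvg0 A_ge0 w'_gt0 c_ge0 w'_rate _ c_lt1 w'_ge1).
Qed.

Definition Gweight {R : realType} (lam : R) (m : nat) : 'I_3 -> R :=
  fun i => nth 0 [:: 300 / (1 - lam ^+ 2) ^+ 2; 50 * m%:R; 1] i.

Section GalphaEstimates.
Variables (R : realType) (m : nat) (L lam alpha : R).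
Hypotheses (m_ge1 : (1 <= m)%N) (lam_ge0 : 0 <= lam) (lam_lt1 : lam < 1).

Let s := 1 - lam ^+ 2.
Let M : R := m%:R.

Lemma s_gt0 : 0 < s.
Proof. by rewrite subr_gt0 expr_lt1. Qed.

Lemma s_le1 : s <= 1.
Proof. by rewrite lerBlDr lerDl sqr_ge0. Qed.

Lemma M_ge1 : 1 <= M.
Proof. by rewrite ler1n. Qed.

Lemma Galpha_ge0 i j : 0 <= Galpha lam alpha L m i j.
Proof.
have s0 := s_gt0; have M1 := M_ge1.
have M0 : 0 < M by apply: lt_le_trans M1.
rewrite /Galpha /mx3 mxE -/s -/M.
case: i => [[|[|[|?]]] ?] //=; case: j => [[|[|[|?]]] ?] //=.
- by rewrite divr_ge0 // addr_ge0 // sqr_ge0.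
- rewrite divr_ge0 ?(ltW s0) //.
  by have := sqr_ge0 (lam * alpha * L); rewrite !exprMn; lra.
- by rewrite divr_ge0 // mulr_ge0 // ltW.
- by rewrite subr_ge0 ler_pdivrMr; lra.
- by rewrite divr_ge0 // ltW.
- by rewrite divr_ge0 // addr_ge0 // sqr_ge0.
Qed.

Lemma Gweight_gt0 i : 0 < Gweight lam m i.
Proof.
have s0 := s_gt0; have M1 := M_ge1.
case: i => [[|[|[|?]]] ?] //; rewrite /Gweight /= -/s -/M.
- by rewrite divr_gt0 // exprn_gt0.
- lra.
Qed.

(* With u = 1/s the columns
   read  300u^2 - 150u + 225/2 + 61u/2 < 300u^2,  50M - 25/2 + 97/8 < 50M  and
   600 P^2 u^3 + 1 - s/2 < 1  where P = lam alpha L; the last one is where the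
   step-size condition 35 P <= s^2 enters. *)
Lemma Galpha_subinvariant :
  0 <= lam * alpha * L -> 35 * (lam * alpha * L) <= s ^+ 2 ->
  forall j, \sum_i Gweight lam m i * Galpha lam alpha L m i j < Gweight lam m j.
Proof.
move=> P_ge0 P_le; set P := lam * alpha * L in P_ge0 P_le.
have s0 := s_gt0; have s1 := s_le1; have M1 := M_ge1.
have M0 : M != 0 by rewrite gt_eqF // (lt_le_trans _ M1).
set u := s^-1.
have s_neq0 : s != 0 by rewrite gt_eqF.
have us : u * s = 1 by rewrite mulVf.
have u1 : 1 <= u by rewrite /u invf_ge1.
have lam2 : lam ^+ 2 = 1 - s by rewrite /s opprB addrC subrK.
have w0 : 300 / s ^+ 2 = 300 * u ^+ 2 by rewrite /u exprVn.
have P2_le : 1225 * P ^+ 2 <= s ^+ 4.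
  rewrite (_ : 1225 * P ^+ 2 = (35 * P) ^+ 2); last by ring.
  rewrite (_ : s ^+ 4 = (s ^+ 2) ^+ 2); last by ring.
  have s2_ge0 : 0 <= s ^+ 2 by rewrite exprn_ge0 // ltW.
  by rewrite ler_sqr ?nnegrE // mulr_ge0.
case=> [[|[|[|?]]] ?] //=;
  rewrite !big_ord_recl big_ord0 /Gweight /Galpha /mx3 !mxE /= -/s -/M ?lam2 w0.
- rewrite (_ : 50 * M * (9 / (4 * M)) = 225 / 2); last by field.
  rewrite (_ : 61 / 2 / s = 61 / 2 * u) //; nra.
- rewrite (_ : 50 * M * (1 - 1 / (4 * M)) = 50 * M - 25 / 2); last by field.
  lra.
- rewrite (_ : 2 * (1 - s) * alpha ^+ 2 * L ^+ 2 / s = 2 * P ^+ 2 * u); last first.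
    by rewrite /P /u -lam2; field.
  have u3s4 : u ^+ 3 * s ^+ 4 = s by rewrite /u; field.
  have : u ^+ 3 * (1225 * P ^+ 2) <= u ^+ 3 * s ^+ 4.
    by rewrite ler_wpM2l // exprn_ge0 // (le_trans _ u1).
  lra.
Qed.

End GalphaEstimates.

Lemma step_size_bound {R : realType} {L lam alpha : R} :
  0 < L -> 0 <= lam -> 0 < alpha ->
  (lam != 0 -> alpha <= (1 - lam ^+ 2) ^+ 2 / (35 * lam) / L) ->
  35 * (lam * alpha * L) <= (1 - lam ^+ 2) ^+ 2.
Proof.
move=> L_gt0 lam_ge0 alpha_gt0 alpha_le.
have [->|lam_nz] := eqVneq lam 0.
  by rewrite !mul0r mulr0 exprn_ge0 // subr_ge0 expr_le1.
have lam_gt0 : 0 < lam by rewrite lt_def lam_nz.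
move: (alpha_le lam_nz); rewrite ler_pdivlMr // ler_pdivlMr ?mulr_gt0 //.
by rewrite [_ * (35 * lam)]mulrC !mulrA [35 * lam * alpha]mulrC !mulrA.
Qed.

Theorem lemma14 (R : realType) (n m : nat) (L lam alpha : R) :
  (1 <= n)%N -> (1 <= m)%N -> 0 < L -> 0 <= lam -> lam < 1 ->
  0 < alpha ->
  (lam != 0 -> alpha <= (1 - lam ^+ 2) ^+ 2 / (35 * lam) / L) ->
  alpha <= Num.sqrt (n%:R) / Num.sqrt (8 * m%:R) / L ->
  spectral_radius (Galpha lam alpha L m) < 1 /\
  (1%:M - Galpha lam alpha L m) \in unitmx /\
  series (fun k => Galpha lam alpha L m ^+ k : 'M[R]_3) @ \oo
    --> (invmx (1%:M - Galpha lam alpha L m) : 'M[R]_3).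
Proof.
move=> _ m_ge1 L_gt0 lam_ge0 lam_lt1 alpha_gt0 alpha_le _.
have P_ge0 : 0 <= lam * alpha * L by rewrite !mulr_ge0 // ltW.
have P_le := step_size_bound L_gt0 lam_ge0 alpha_gt0 alpha_le.
apply: (@neumann_of_subinvariant_weight R 2 _ (Gweight lam m)).
- exact: Galpha_ge0.
- exact: Gweight_gt0.
- exact: Galpha_subinvariant.
Qed.
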